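(* Let $n\ge2$ be an integer and let $A_1,\dots,A_{2n}$ be (not necessarily distinct) points in $\mathbb{R}^m$; set $A_{2n+1}=A_1$. Let $G_1$ be the centroid of the odd-indexed points $A_1,A_3,\dots,A_{2n-1}$ and $G_2$ the centroid of the even-indexed points $A_2,A_4,\dots,A_{2n}$. Then $$\sum_{i=1}^{2n}|A_iA_{i+1}|^2=\sum_{\substack{1\le i<j\le 2n\\ 1<j-i<2n-1}}(-1)^{j-i}|A_iA_j|^2+n^2|G_1G_2|^2.$$ In particular, for $n=2$ this is the identity $|A_1A_2|^2+|A_2A_3|^2+|A_3A_4|^2+|A_4A_1|^2=|A_1A_3|^2+|A_2A_4|^2+4|LM|^2$, where $L,M$ are the midpoints of $A_1A_3$ and $A_2A_4$.
   Context: $|XY|$ denotes the Euclidean distance in $\mathbb{R}^m$; the centroid of points $B_1,\dots,B_r$ is the point with position vector $\frac1r\sum_k B_k$. *)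

From mathcomp Require Import all_boot all_order all_algebra.
Set Implicit Arguments. Unset Strict Implicit. Unset Printing Implicit Defensive.
Import Order.TTheory GRing.Theory Num.Theory.
Local Open Scope ring_scope.

Definition edist (R : rcfType) (m : nat) (X Y : 'rV[R]_m) : R :=
  Num.sqrt (\sum_(k < m) (X 0 k - Y 0 k) ^+ 2).

Definition cyc (T : Type) (n : nat) (A : nat -> T) (i : nat) : T :=
  if i == (2 * n).+1 then A 1%N else A i.

Definition centroid (R : rcfType) (m r : nat) (B : nat -> 'rV[R]_m) : 'rV[R]_m :=
  r%:R^-1 *: \sum_(1 <= k < r.+1) B k.

From mathcomp Require Import all_boot all_order all_algebra.
From mathcomp Require Import zify ring.
Set Implicit Arguments. Unset Strict Implicit. Unset Printing Implicit Defensive.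
Import Order.TTheory GRing.Theory Num.Theory.
Local Open Scope ring_scope.

(* Everything happens coordinatewise, so it suffices to prove the identity for
   numbers a_1, ..., a_2n in a commutative ring.  Weighting the pair (i, j) by
   s_i s_j with s_i = (-1)^i, the Lagrange-type identity
   sum_{i<j} s_i s_j (a_i - a_j)^2 = (sum s_i)(sum s_i a_i^2) - (sum s_i a_i)^2
   has vanishing first term, so the signed sum over all pairs equals
   -(sum of odd a_i - sum of even a_i)^2.  The pairs excluded on the right-hand
   side are exactly the cyclically adjacent ones, which all carry the sign -1;
   moving them to the other side leaves the cyclic sum of consecutive squares. *)

Lemma sum_weighted_pairs_sqr (R : comPzRingType) (s a : nat -> R) N :
  \sum_(1 <= i < N.+1) \sum_(i.+1 <= j < N.+1) s i * s j * (a i - a j) ^+ 2 =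
  (\sum_(1 <= i < N.+1) s i) * (\sum_(1 <= i < N.+1) s i * a i ^+ 2)
    - (\sum_(1 <= i < N.+1) s i * a i) ^+ 2.
Proof.
elim: N => [|N IH]; first by rewrite !big_geq //; ring.
rewrite (big_nat_recr N.+1) //= [X in _ + X]big_geq // addr0.
under eq_big_nat => i /andP[_ ltiN] do rewrite (big_nat_recr N.+1) //=.
rewrite big_split /= IH !(big_nat_recr N.+1 1) //=.
have -> : \sum_(1 <= i < N.+1) s i * s N.+1 * (a i - a N.+1) ^+ 2 =
    s N.+1 * (\sum_(1 <= i < N.+1) s i * a i ^+ 2)
    - 2%:R * s N.+1 * a N.+1 * (\sum_(1 <= i < N.+1) s i * a i)
    + s N.+1 * a N.+1 ^+ 2 * (\sum_(1 <= i < N.+1) s i).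
  by rewrite !mulr_sumr -sumrB -big_split /=; apply: eq_bigr => i _; ring.
ring.
Qed.

Lemma signr_double (R : pzRingType) n : (-1 : R) ^+ (2 * n) = 1.
Proof. by rewrite -signr_odd oddM. Qed.

Lemma signr_subn (R : pzRingType) i j :
  (i <= j)%N -> (-1 : R) ^+ (j - i) = (-1) ^+ i * (-1) ^+ j.
Proof.
move=> leij; rewrite -{2}(subnKC leij) exprD mulrA -exprD.
by rewrite addnn -mul2n signr_double mul1r.
Qed.

Lemma sum_signr_double (R : pzRingType) n :
  \sum_(1 <= i < (2 * n).+1) (-1 : R) ^+ i = 0.
Proof.
elim: n => [|n IH]; first by rewrite big_geq.
rewrite (_ : (2 * n.+1).+1 = (2 * n).+3)%N; last lia.
rewrite (big_nat_recr (2 * n).+2) // (big_nat_recr (2 * n).+1) //= IH add0r.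
by rewrite !exprS signr_double mulr1 mulN1r opprK addNr.
Qed.

Lemma sum_odd_sub_sum_even (R : pzRingType) (a : nat -> R) n :
  \sum_(1 <= k < n.+1) a (2 * k - 1)%N - \sum_(1 <= k < n.+1) a (2 * k)%N =
  - \sum_(1 <= i < (2 * n).+1) (-1) ^+ i * a i.
Proof.
elim: n => [|n IH]; first by rewrite !big_geq // subrr oppr0.
rewrite (_ : (2 * n.+1).+1 = (2 * n).+3)%N; last lia.
rewrite (big_nat_recr (2 * n).+2) // (big_nat_recr (2 * n).+1) //= !opprD -IH.
rewrite !(big_nat_recr n.+1 1) //=.
rewrite (_ : 2 * n.+1 - 1 = (2 * n).+1)%N; last lia.
rewrite (_ : 2 * n.+1 = (2 * n).+2)%N; last lia.
rewrite !exprS signr_double mulr1 mulrNN mulr1 mul1r mulN1r opprK.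
by rewrite opprD addrACA addrA.
Qed.

Lemma sum_signed_pairs_sqr (R : comPzRingType) (a : nat -> R) n :
  \sum_(1 <= i < (2 * n).+1) \sum_(i.+1 <= j < (2 * n).+1)
      (-1) ^+ (j - i) * (a i - a j) ^+ 2 =
  - (\sum_(1 <= k < n.+1) a (2 * k - 1)%N - \sum_(1 <= k < n.+1) a (2 * k)%N) ^+ 2.
Proof.
rewrite sum_odd_sub_sum_even sqrrN.
have := sum_weighted_pairs_sqr (fun i => (-1) ^+ i) a (2 * n).
rewrite sum_signr_double mul0r sub0r => <-.
apply: eq_big_nat => i _; apply: eq_big_nat => j /andP[ltij _].
by rewrite signr_subn // ltnW.
Qed.

Lemma sum_cyc (T : Type) (V : nmodType) (F : T -> T -> V) (a : nat -> T) n :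
  (0 < n)%N ->
  \sum_(1 <= i < (2 * n).+1) F (a i) (cyc n a i.+1) =
  \sum_(1 <= i < 2 * n) F (a i) (a i.+1) + F (a (2 * n)%N) (a 1%N).
Proof.
move=> n_gt0; rewrite big_nat_recr /=; last lia.
rewrite /cyc eqxx; congr (_ + _); apply: eq_big_nat => i /andP[_ lti2n].
by rewrite ifN_eqC //; apply/eqP; lia.
Qed.

Section NonadjacentPairs.

Variables (V : nmodType) (f : nat -> nat -> V) (n : nat).
Hypothesis n_ge2 : (2 <= n)%N.

Lemma sum_adjacent_row i : (1 <= i < 2 * n)%N ->
  \sum_(i.+1 <= j < (2 * n).+1 | ~~ (1 < j - i < 2 * n - 1)%N) f i j =
  f i i.+1 + (if i == 1%N then f 1%N (2 * n)%N else 0).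
Proof.
move=> /andP[i_gt0 lti2n].
rewrite big_mkcond big_ltn; last lia.
rewrite subSnn /=; congr (_ + _).
case: eqP => [->|i_neq1].
  rewrite big_nat_recr /=; last lia.
  rewrite ltnn andbF /= big_nat_cond big1 ?add0r // => j /andP[/andP[ltj1 ltj2n] _].
  by rewrite ifF //; apply/negbF/andP; split; lia.
rewrite big_nat_cond big1 // => j /andP[/andP[ltij ltj2n] _].
by rewrite ifF //; apply/negbF/andP; split; lia.
Qed.

Lemma sum_adjacent_pairs :
  \sum_(1 <= i < (2 * n).+1)
     \sum_(i.+1 <= j < (2 * n).+1 | ~~ (1 < j - i < 2 * n - 1)%N) f i j =
  \sum_(1 <= i < 2 * n) f i i.+1 + f 1%N (2 * n)%N.
Proof.
rewrite big_nat_recr /=; last lia.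
rewrite [X in _ + X]big_geq // addr0.
under eq_big_nat => i lti2n do rewrite sum_adjacent_row //.
rewrite big_split /=; congr (_ + _).
rewrite big_ltn ?eqxx; last lia.
rewrite big_nat_cond big1 ?addr0 // => i /andP[/andP[lt1i _] _].
by rewrite ifN_eqC //; apply/eqP; lia.
Qed.

End NonadjacentPairs.

Lemma cycle_sqr_sum_identity (R : comPzRingType) (a : nat -> R) n : (2 <= n)%N ->
  \sum_(1 <= i < 2 * n) (a i - a i.+1) ^+ 2 + (a (2 * n)%N - a 1%N) ^+ 2 =
  \sum_(1 <= i < (2 * n).+1) \sum_(i.+1 <= j < (2 * n).+1 | (1 < j - i < 2 * n - 1)%N)
      (-1) ^+ (j - i) * (a i - a j) ^+ 2
  + (\sum_(1 <= k < n.+1) a (2 * k - 1)%N - \sum_(1 <= k < n.+1) a (2 * k)%N) ^+ 2.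
Proof.
move=> n_ge2.
have := sum_signed_pairs_sqr a n.
under eq_bigr => i _ do rewrite (bigID (fun j => (1 < j - i < 2 * n - 1)%N)) /=.
rewrite big_split /= sum_adjacent_pairs //.
have -> : \sum_(1 <= i < 2 * n) (-1) ^+ (i.+1 - i) * (a i - a i.+1) ^+ 2 =
    - \sum_(1 <= i < 2 * n) (a i - a i.+1) ^+ 2 :> R.
  by rewrite -sumrN; apply: eq_bigr => i _; rewrite subSnn expr1 mulN1r.
have -> : (-1 : R) ^+ (2 * n - 1) = -1.
  by rewrite (_ : 2 * n - 1 = (2 * (n - 1)).+1)%N ?exprS ?signr_double ?mulr1 //; lia.
move=> /(canRL (addrK _)) ->; ring.
Qed.

Lemma sqr_edist (R : rcfType) m (X Y : 'rV[R]_m) :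
  edist X Y ^+ 2 = \sum_(k < m) (X 0 k - Y 0 k) ^+ 2.
Proof. by rewrite sqr_sqrtr // sumr_ge0 // => k _; apply: sqr_ge0. Qed.

Lemma sqr_edist_centroid (R : rcfType) m r (B C : nat -> 'rV[R]_m) : (0 < r)%N ->
  r%:R ^+ 2 * edist (centroid r B) (centroid r C) ^+ 2 =
  \sum_(k < m) (\sum_(1 <= i < r.+1) B i 0 k - \sum_(1 <= i < r.+1) C i 0 k) ^+ 2.
Proof.
move=> r_gt0; rewrite sqr_edist mulr_sumr; apply: eq_bigr => k _.
rewrite !mxE !summxE -mulrBr exprMn mulrA -exprMn mulfV ?expr1n ?mul1r //.
by rewrite pnatr_eq0 -lt0n.
Qed.

Theorem corollary3p1 (R : rcfType) (m n : nat) (A : nat -> 'rV[R]_m) :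
  (2 <= n)%N ->
  \sum_(1 <= i < (2 * n).+1) edist (A i) (cyc n A i.+1) ^+ 2 =
  \sum_(1 <= i < (2 * n).+1) \sum_(i.+1 <= j < (2 * n).+1 | (1 < j - i < 2 * n - 1)%N)
      (-1) ^+ (j - i) * edist (A i) (A j) ^+ 2
  + n%:R ^+ 2 * edist (centroid n (fun k => A (2 * k - 1)%N))
                      (centroid n (fun k => A (2 * k)%N)) ^+ 2.
Proof.
move=> n_ge2.
rewrite (sum_cyc (fun X Y => edist X Y ^+ 2)) /=; last lia.
rewrite sqr_edist_centroid /=; last lia.
under eq_bigr do rewrite sqr_edist.
under [X in _ = X + _]eq_bigr do under eq_bigr do rewrite sqr_edist mulr_sumr.
rewrite sqr_edist exchange_big -big_split /=.
under [X in _ = X + _]eq_bigr do rewrite exchange_big /=.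
rewrite exchange_big -big_split /=; apply: eq_bigr => k _.
exact: cycle_sqr_sum_identity.
Qed.
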